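(* Let $(X,\nu_X)$ and $(Y,\nu_Y)$ be centered spaces with $\operatorname{card} Y\ge 2$, and fix $x\in X$. Let $C_x(X,Y)$ be the set of functions $X\to Y$ that are centered at $x$, and define the relation $\hat x$ on $C_x(X,Y)$ by: $f\,\hat x\,g$ if and only if there is $N\in\nu_X(x)$ with $N\subseteq\{z\in X\mid f(z)=g(z)\}$. Then $\nu_X(x)$ is a filterbase on $X$ if and only if $\hat x$ is a nontrivial equivalence relation on $C_x(X,Y)$.
   Context: A centered structure on a set $X$ assigns to each point $x\in X$ a collection $\nu(x)$ of subsets of $X$ such that $x\in N$ for every $N\in\nu(x)$; a set with a centered structure is a centered space. For collections $\mathcal P,\mathcal Q$ of subsets of a set, write $\mathcal P\preceq\mathcal Q$ if for every $Q\in\mathcal Q$ there is $P\in\mathcal P$ with $P\subseteq Q$. A function $f\colon X\to Y$ between centered spaces $(X,\nu_X)$, $(Y,\nu_Y)$ is centered at $x\in X$ if $\{f(N)\mid N\in\nu_X(x)\}\preceq\nu_Y(f(x))$, i.e. for each $M\in\nu_Y(f(x))$ there is $N\in\nu_X(x)$ with $f(N)\subseteq M$. A nonempty collection $\mathcal P$ of subsets of $X$ is a filterbase on $X$ if (F0) every finite intersection $A_1\cap\cdots\cap A_n$ ($n\ge1$) of members of $\mathcal P$ is nonempty and (F2) for all $A,B\in\mathcal P$ there is $C\in\mathcal P$ with $C\subseteq A\cap B$. An equivalence relation on a set $S$ is nontrivial if it is not the total relation $S\times S$. *)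

From Stdlib Require Import List.
Import ListNotations.

Definition centered {X : Type} (nu : X -> (X -> Prop) -> Prop) : Prop :=
  forall x N, nu x N -> N x.

Definition image_sub {X Y : Type} (f : X -> Y) (N : X -> Prop) (M : Y -> Prop) : Prop :=
  forall z, N z -> M (f z).

(* f is centered at x: {f(N) | N ∈ nuX x} ≼ nuY (f x) *)
Definition centered_at {X Y : Type} (nuX : X -> (X -> Prop) -> Prop)
  (nuY : Y -> (Y -> Prop) -> Prop) (f : X -> Y) (x : X) : Prop :=
  forall M, nuY (f x) M -> exists N, nuX x N /\ image_sub f N M.

(* Filterbase: nonempty, (F0) nonempty finite intersections (n >= 1),
   (F2) directed downward. *)
Definition filterbase {X : Type} (P : (X -> Prop) -> Prop) : Prop :=
  (exists A, P A) /\
  (forall l : list (X -> Prop), l <> [] -> Forall P l ->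
     exists z, Forall (fun A => A z) l) /\
  (forall A B, P A -> P B -> exists C, P C /\ forall z, C z -> A z /\ B z).

Definition Cx {X Y : Type} (nuX : X -> (X -> Prop) -> Prop)
  (nuY : Y -> (Y -> Prop) -> Prop) (x : X) : Type :=
  { f : X -> Y | centered_at nuX nuY f x }.

Definition xhat {X Y : Type} (nuX : X -> (X -> Prop) -> Prop)
  (nuY : Y -> (Y -> Prop) -> Prop) (x : X) (f g : Cx nuX nuY x) : Prop :=
  exists N, nuX x N /\ forall z, N z -> proj1_sig f z = proj1_sig g z.

Definition equivalence_rel {S : Type} (R : S -> S -> Prop) : Prop :=
  (forall a, R a a) /\ (forall a b, R a b -> R b a) /\
  (forall a b c, R a b -> R b c -> R a c).

Definition nontrivial_rel {S : Type} (R : S -> S -> Prop) : Prop :=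
  ~ (forall a b, R a b).

(** Every member of [nuX x] contains [x], so (F0) is automatic and being a
    filterbase amounts to [nuX x] being nonempty and downward directed.
    Directedness gives transitivity of [xhat], and two distinct constants
    are never [xhat]-related.  Conversely, for [A, B] in [nuX x] the maps
    [1_A] and [1_(B ∪ ¬A)] (with values [y1]/[y2]) are centered at [x],
    each is [xhat]-related to the constant [y1], and they agree exactly on
    [A ∩ B]; transitivity therefore yields a member of [nuX x] inside
    [A ∩ B]. *)

From Stdlib Require Import List Classical ClassicalDescription.

Definition downward_directed {X : Type} (P : (X -> Prop) -> Prop) : Prop :=
  forall A B, P A -> P B -> exists C, P C /\ forall z, C z -> A z /\ B z.

Definition indicator {X Y : Type} (S : X -> Prop) (y1 y2 : Y) (z : X) : Y :=
  if excluded_middle_informative (S z) then y1 else y2.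

Lemma indicator_eq_iff {X Y : Type} (S T : X -> Prop) (y1 y2 : Y) (z : X) :
  y1 <> y2 -> (indicator S y1 y2 z = indicator T y1 y2 z <-> (S z <-> T z)).
Proof.
  intros Hy. unfold indicator.
  destruct (excluded_middle_informative (S z));
  destruct (excluded_middle_informative (T z)); split; intros H; try tauto;
    exfalso; apply Hy; congruence.
Qed.

Section CenteredSpaces.

Variables (X Y : Type) (nuX : X -> (X -> Prop) -> Prop)
  (nuY : Y -> (Y -> Prop) -> Prop).
Hypotheses (hX : centered nuX) (hY : centered nuY).
Variable x : X.

Lemma filterbase_iff_directed :
  filterbase (nuX x) <-> (exists A, nuX x A) /\ downward_directed (nuX x).
Proof.
  split.
  - intros [Hne [_ Hdir]]. split; assumption.
  - intros [Hne Hdir]. split; [exact Hne | split; [| exact Hdir]].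
    intros l _ Hl. exists x. rewrite Forall_forall in *.
    intros A HA. exact (hX _ _ (Hl A HA)).
Qed.

Lemma centered_at_of_constant_on (f : X -> Y) (N : X -> Prop) :
  nuX x N -> (forall z, N z -> f z = f x) -> centered_at nuX nuY f x.
Proof.
  intros HN Hc M HM. exists N. split; [exact HN |].
  intros z Hz. rewrite (Hc z Hz). exact (hY _ _ HM).
Qed.

Lemma centered_at_const (y : Y) (N : X -> Prop) :
  nuX x N -> centered_at nuX nuY (fun _ => y) x.
Proof. intros HN. apply (centered_at_of_constant_on _ N HN). reflexivity. Qed.

Lemma centered_at_indicator (S N : X -> Prop) (y1 y2 : Y) :
  nuX x N -> (forall z, N z -> S z) -> centered_at nuX nuY (indicator S y1 y2) x.
Proof.
  intros HN HNS. apply (centered_at_of_constant_on _ N HN).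
  intros z Hz. unfold indicator.
  destruct (excluded_middle_informative (S z)) as [_ | HSz];
    [| exfalso; exact (HSz (HNS z Hz))].
  destruct (excluded_middle_informative (S x)) as [_ | HSx]; [reflexivity |].
  exfalso. exact (HSx (HNS x (hX _ _ HN))).
Qed.

Lemma xhat_refl (f : Cx nuX nuY x) :
  (exists A, nuX x A) -> xhat nuX nuY x f f.
Proof. intros [A HA]. exists A. split; auto. Qed.

Lemma xhat_sym (f g : Cx nuX nuY x) :
  xhat nuX nuY x f g -> xhat nuX nuY x g f.
Proof. intros [N [HN H]]. exists N. split; auto. intros z Hz. symmetry; auto. Qed.

Lemma xhat_trans (f g h : Cx nuX nuY x) :
  downward_directed (nuX x) ->
  xhat nuX nuY x f g -> xhat nuX nuY x g h -> xhat nuX nuY x f h.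
Proof.
  intros Hdir [A [HA Hfg]] [B [HB Hgh]].
  destruct (Hdir A B HA HB) as [C [HC HCAB]].
  exists C. split; [exact HC |].
  intros z Hz. destruct (HCAB z Hz). rewrite Hfg by assumption. auto.
Qed.

Lemma xhat_const_neq (y1 y2 : Y) (N : X -> Prop) (HN : nuX x N) :
  y1 <> y2 ->
  ~ xhat nuX nuY x (exist _ (fun _ => y1) (centered_at_const y1 N HN))
                   (exist _ (fun _ => y2) (centered_at_const y2 N HN)).
Proof. intros Hy [M [HM H]]. exact (Hy (H x (hX _ _ HM))). Qed.

Lemma xhat_equivalence_nontrivial :
  (exists y1 y2 : Y, y1 <> y2) -> filterbase (nuX x) ->
  equivalence_rel (xhat nuX nuY x) /\ nontrivial_rel (xhat nuX nuY x).
Proof.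
  intros [y1 [y2 Hy]] Hfb.
  destruct (proj1 filterbase_iff_directed Hfb) as [[N HN] Hdir].
  split; [split; [| split] |].
  - intros f. apply xhat_refl. exists N; exact HN.
  - exact xhat_sym.
  - intros f g h. exact (xhat_trans f g h Hdir).
  - intros Hall. exact (xhat_const_neq y1 y2 N HN Hy (Hall _ _)).
Qed.

Lemma directed_of_xhat_trans (y1 y2 : Y) :
  y1 <> y2 ->
  (forall f g h, xhat nuX nuY x f g -> xhat nuX nuY x g h -> xhat nuX nuY x f h) ->
  downward_directed (nuX x).
Proof.
  intros Hy Htr A B HA HB.
  set (SB := fun z => B z \/ ~ A z).
  pose (f := exist _ (indicator A y1 y2) (centered_at_indicator A A y1 y2 HA (fun _ H => H))
             : Cx nuX nuY x).
  pose (h := exist _ (indicator SB y1 y2)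
               (centered_at_indicator SB B y1 y2 HB (fun z H => or_introl H))
             : Cx nuX nuY x).
  pose (c := exist _ (fun _ => y1) (centered_at_const y1 A HA) : Cx nuX nuY x).
  assert (Hfc : xhat nuX nuY x f c).
  { exists A. split; [exact HA |]. intros z Hz. simpl. unfold indicator.
    destruct (excluded_middle_informative (A z)); tauto. }
  assert (Hch : xhat nuX nuY x c h).
  { exists B. split; [exact HB |]. intros z Hz. simpl. unfold indicator.
    destruct (excluded_middle_informative (SB z)) as [_ | HSB]; [reflexivity |].
    exfalso. apply HSB. left; exact Hz. }
  destruct (Htr f c h Hfc Hch) as [C [HC Hfh]].
  exists C. split; [exact HC |].
  intros z Hz. apply (indicator_eq_iff A SB y1 y2 z Hy) in Hfh as Hiff; [| exact Hz].
  unfold SB in Hiff. tauto.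
Qed.

Lemma filterbase_of_xhat_equivalence :
  (exists y1 y2 : Y, y1 <> y2) ->
  equivalence_rel (xhat nuX nuY x) -> nontrivial_rel (xhat nuX nuY x) ->
  filterbase (nuX x).
Proof.
  intros [y1 [y2 Hy]] [Hrefl [_ Htr]] Hnt.
  apply filterbase_iff_directed. split.
  - destruct (classic (inhabited (Cx nuX nuY x))) as [[f] | Hempty].
    + destruct (Hrefl f) as [N [HN _]]. exists N; exact HN.
    + exfalso. apply Hnt. intros f. exfalso. exact (Hempty (inhabits f)).
  - exact (directed_of_xhat_trans y1 y2 Hy Htr).
Qed.

End CenteredSpaces.

Theorem mainTheorem3 (X Y : Type)
  (nuX : X -> (X -> Prop) -> Prop) (nuY : Y -> (Y -> Prop) -> Prop)
  (hX : centered nuX) (hY : centered nuY)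
  (hcardY : exists y1 y2 : Y, y1 <> y2) (x : X) :
  filterbase (nuX x) <->
  (equivalence_rel (xhat nuX nuY x) /\ nontrivial_rel (xhat nuX nuY x)).
Proof.
  split.
  - exact (xhat_equivalence_nontrivial X Y nuX nuY hX hY x hcardY).
  - intros [Heq Hnt].
    exact (filterbase_of_xhat_equivalence X Y nuX nuY hX hY x hcardY Heq Hnt).
Qed.
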